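(* Let $\Lambda$ be a complex $m\times N$ matrix and let $\pi$ be an $N\times N$ real diagonal matrix with strictly positive diagonal entries. Let $\Gamma_{mp}$ be the Moore–Penrose inverse of $\Lambda$, let $M:=\Gamma_{mp}\Lambda$ (so $M=M^\dagger=M^2$), and define $$\Gamma_{opt}:=\Gamma_{mp}-\big[(I-M)\pi(I-M)\big]^{\ddagger}\,\pi M\,\Gamma_{mp},$$ where $X^{\ddagger}$ denotes the Moore–Penrose inverse of $X$ and $I$ is the $N\times N$ identity. Then $\Gamma_{opt}$ is a minimum norm g-inverse of $\Lambda$ with respect to $\pi$, i.e. $\Lambda\Gamma_{opt}\Lambda=\Lambda$ and $\pi\Gamma_{opt}\Lambda=\Lambda^\dagger\Gamma_{opt}^\dagger\pi$.
   Context: $\dagger$ denotes the conjugate transpose. The Moore–Penrose inverse $\Gamma_{mp}$ of $\Lambda$ is the unique $N\times m$ matrix satisfying $\Lambda\Gamma_{mp}\Lambda=\Lambda$, $\Gamma_{mp}\Lambda\Gamma_{mp}=\Gamma_{mp}$, $(\Gamma_{mp}\Lambda)^\dagger=\Gamma_{mp}\Lambda$, $(\Lambda\Gamma_{mp})^\dagger=\Lambda\Gamma_{mp}$. A g-inverse of $\Lambda$ is any $N\times m$ matrix $\Gamma$ with $\Lambda\Gamma\Lambda=\Lambda$. *)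

(* Complex scalars: an arbitrary numClosedFieldType C
   (e.g. algC), with conjugation Num.conj. *)
From HB Require Import structures.
From mathcomp Require Import all_boot all_order all_algebra.
Set Implicit Arguments. Unset Strict Implicit. Unset Printing Implicit Defensive.
Import Order.TTheory GRing.Theory Num.Theory.
Local Open Scope ring_scope.

Definition ctmx (C : numClosedFieldType) (m n : nat) (A : 'M[C]_(m, n)) : 'M[C]_(n, m) :=
  (map_mx Num.conj A)^T.

Definition is_ginv (C : numClosedFieldType) (m n : nat)
  (A : 'M[C]_(m, n)) (G : 'M[C]_(n, m)) : Prop :=
  A *m G *m A = A.

Definition is_MPinv (C : numClosedFieldType) (m n : nat)
  (A : 'M[C]_(m, n)) (G : 'M[C]_(n, m)) : Prop :=
  [/\ A *m G *m A = A, G *m A *m G = G,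
      ctmx (G *m A) = G *m A & ctmx (A *m G) = A *m G].

From HB Require Import structures.
From mathcomp Require Import all_boot all_order all_algebra.
Import Order.TTheory GRing.Theory Num.Theory.
Local Open Scope ring_scope.

Set Implicit Arguments.
Unset Strict Implicit.

(* Write M := Gmp Lambda for the orthogonal projector onto the row space of
   Lambda, P := I - M for its complement and Y := P pi P for the weight
   compressed to the range of P.  Because pi is positive definite, Y is
   definite on the range of P, and this forces its Moore--Penrose inverse X
   to satisfy X Y = Y X = P; X is then hermitian and X P = X.  Consequently
     Gopt Lambda = M - X pi M = M - X pi + X (P pi P) = I - X pi,
   and Lambda X = Lambda P Y X = 0.  The first identity yields
   Lambda Gopt Lambda = Lambda, and pi Gopt Lambda = pi - pi X pi is
   hermitian, which is the minimum-norm condition. *)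

Section ConjugateTranspose.
Variable C : numClosedFieldType.

Lemma ctmxM m n p (A : 'M[C]_(m, n)) (B : 'M[C]_(n, p)) :
  ctmx (A *m B) = ctmx B *m ctmx A.
Proof. by rewrite /ctmx map_mxM trmx_mul. Qed.

Lemma ctmxB m n (A B : 'M[C]_(m, n)) : ctmx (A - B) = ctmx A - ctmx B.
Proof. by rewrite /ctmx map_mxB linearB. Qed.

Lemma ctmxK m n (A : 'M[C]_(m, n)) : ctmx (ctmx A) = A.
Proof. by apply/matrixP=> i j; rewrite /ctmx !mxE conjCK. Qed.

Lemma ctmx1 n : ctmx (1%:M : 'M[C]_n) = 1%:M.
Proof. by rewrite /ctmx map_mx1 trmx1. Qed.

Definition hermitian n (A : 'M[C]_n) : Prop := ctmx A = A.

Lemma MPinv_ctmx m n (A : 'M[C]_(m, n)) (X : 'M[C]_(n, m)) :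
  is_MPinv A X -> is_MPinv (ctmx A) (ctmx X).
Proof.
case=> AXA XAX hXA hAX; split.
- by rewrite -!ctmxM mulmxA AXA.
- by rewrite -!ctmxM mulmxA XAX.
- by rewrite -ctmxM hAX.
- by rewrite -ctmxM hXA.
Qed.

End ConjugateTranspose.

Section PositiveWeight.
Variable C : numClosedFieldType.

Definition definite_weight n (pi : 'M[C]_n) : Prop :=
  forall k (Z : 'M[C]_(n, k)), ctmx Z *m pi *m Z = 0 -> Z = 0.

Variables (n : nat) (d : 'rV[C]_n).
Hypothesis d_pos : forall i, 0 < d 0 i.

Lemma diag_pos_hermitian : hermitian (diag_mx d).
Proof.
apply/matrixP=> i j; rewrite /ctmx !mxE eq_sym.
by case: eqP => [->|_]; rewrite ?mulr1n ?mulr0n ?conjC0 // conj_Creal ?gtr0_real.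
Qed.

(* The diagonal entry (j, j) of Z^dagger pi Z is sum_l |Z l j|^2 d l, a sum of
   nonnegative terms that vanishes only when column j of Z does. *)
Lemma diag_pos_definite : definite_weight (diag_mx d).
Proof.
move=> k Z ZpiZ; apply/matrixP=> i j.
have := congr1 (fun A : 'M[C]_k => A j j) ZpiZ; rewrite /= mul_mx_diag mxE.
under eq_bigr => l _ do rewrite mxE /ctmx !mxE mulrAC [_^* * _]mulrC -normCK.
rewrite mxE => sum0.
have term_ge0 l : xpredT l -> 0 <= `|Z l j| ^+ 2 * d 0 l.
  by move=> _; rewrite mulr_ge0 ?exprn_ge0 // ltW.
move/eqP: (psumr_eq0P term_ge0 sum0 (i := i) isT).
by rewrite mulf_eq0 (gt_eqF (d_pos i)) orbF expf_eq0 normr_eq0 mxE => /eqP.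
Qed.

End PositiveWeight.

Section RangeProjector.
Variables (C : numClosedFieldType) (n : nat) (Y P : 'M[C]_n).
Hypotheses (Y_herm : hermitian Y) (P_herm : hermitian P).
Hypotheses (P_idem : P *m P = P) (PY : P *m Y = Y).
Hypothesis Y_definite : forall Z : 'M[C]_n, P *m Z = Z -> Y *m Z = 0 -> Z = 0.

Lemma Y_P : Y *m P = Y.
Proof. by rewrite -[RHS]Y_herm -[in RHS]PY ctmxM P_herm Y_herm. Qed.

(* P - X Y lies in the range of P (X Y is hermitian and P Y = Y) and is
   annihilated by Y (since Y X Y = Y), hence vanishes. *)
Lemma MPinv_left_projector (X : 'M[C]_n) : is_MPinv Y X -> X *m Y = P.
Proof.
case=> YXY _ XY_herm _; apply/eqP; rewrite eq_sym -subr_eq0; apply/eqP.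
apply: Y_definite.
- have PXY : P *m (X *m Y) = X *m Y.
    by rewrite -XY_herm ctmxM Y_herm mulmxA PY.
  by rewrite mulmxBr P_idem PXY.
- by rewrite mulmxBr Y_P mulmxA YXY subrr.
Qed.

(* X^dagger is a Moore--Penrose inverse of Y^dagger = Y, so X^dagger Y = P. *)
Lemma MPinv_right_projector (X : 'M[C]_n) : is_MPinv Y X -> Y *m X = P.
Proof.
move=> /MPinv_ctmx; rewrite Y_herm => /MPinv_left_projector XcY.
by rewrite -[Y]Y_herm -[X]ctmxK -ctmxM XcY P_herm.
Qed.

Lemma MPinv_range (X : 'M[C]_n) : is_MPinv Y X -> X *m P = X.
Proof.
move=> hX; rewrite -(MPinv_right_projector hX) mulmxA.
by case: hX => _ XYX _ _.
Qed.

(* X = X (Y X^dagger) = (X Y) X^dagger = P X^dagger = X^dagger. *)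
Lemma MPinv_hermitian (X : 'M[C]_n) : is_MPinv Y X -> hermitian X.
Proof.
move=> hX.
have YcX : Y *m ctmx X = P.
  by rewrite -Y_herm -ctmxM (MPinv_left_projector hX) P_herm.
have PcX : P *m ctmx X = ctmx X by rewrite -P_herm -ctmxM (MPinv_range hX).
by rewrite /hermitian -[RHS](MPinv_range hX) -YcX mulmxA
  (MPinv_left_projector hX) PcX.
Qed.

End RangeProjector.

Section MinimumNormGinverse.
Variables (C : numClosedFieldType) (m N : nat).
Variables (Lam : 'M[C]_(m, N)) (G : 'M[C]_(N, m)) (pi X : 'M[C]_N).
Hypotheses (pi_herm : hermitian pi) (pi_def : definite_weight pi).
Hypothesis G_MP : is_MPinv Lam G.

Local Notation M := (G *m Lam).
Local Notation P := (1%:M - G *m Lam).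
Local Notation Y := (P *m pi *m P).

Hypothesis X_MP : is_MPinv Y X.

Lemma M_idem : M *m M = M.
Proof. by case: G_MP => _ GLG _ _; rewrite !mulmxA GLG. Qed.

Lemma P_hermitian : hermitian P.
Proof. by case: G_MP => _ _ GL_herm _; rewrite /hermitian ctmxB ctmx1 GL_herm. Qed.

Lemma P_idem : P *m P = P.
Proof. by rewrite mulmxBl mul1mx mulmxBr mulmx1 M_idem subrr subr0. Qed.

Lemma Lam_P : Lam *m P = 0.
Proof. by case: G_MP => LGL _ _ _; rewrite mulmxBr mulmx1 mulmxA LGL subrr. Qed.

Lemma Y_hermitian : hermitian Y.
Proof. by rewrite /hermitian !ctmxM P_hermitian pi_herm mulmxA. Qed.

Lemma P_Y : P *m Y = Y.
Proof. by rewrite !mulmxA P_idem. Qed.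

(* On the range of P, Z^dagger Y Z = Z^dagger pi Z, so Y inherits the
   definiteness of pi there. *)
Lemma Y_definite_on_range (Z : 'M[C]_N) : P *m Z = Z -> Y *m Z = 0 -> Z = 0.
Proof.
move=> PZ YZ; apply: pi_def.
have cZP : ctmx Z = ctmx Z *m P by rewrite -{1}PZ ctmxM P_hermitian.
have -> : ctmx Z *m pi *m Z = ctmx Z *m (Y *m Z).
  by rewrite !mulmxA -cZP -(mulmxA _ P Z) PZ.
by rewrite YZ mulmx0.
Qed.

Lemma X_Y : X *m Y = P.
Proof.
exact: (MPinv_left_projector Y_hermitian P_hermitian P_idem P_Y
          Y_definite_on_range X_MP).
Qed.

Lemma X_P : X *m P = X.
Proof.
exact: (MPinv_range Y_hermitian P_hermitian P_idem P_Y Y_definite_on_range X_MP).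
Qed.

Lemma X_hermitian : hermitian X.
Proof.
exact: (MPinv_hermitian Y_hermitian P_hermitian P_idem P_Y
          Y_definite_on_range X_MP).
Qed.

Lemma Lam_X : Lam *m X = 0.
Proof.
by case: X_MP => _ XYX _ _; rewrite -XYX X_Y mulmxA Lam_P mul0mx.
Qed.

Lemma Gopt_Lam : (G - X *m pi *m M *m G) *m Lam = 1%:M - X *m pi.
Proof.
have XpiP : X *m pi *m P = P by rewrite -X_P -!mulmxA (mulmxA P pi P) X_Y.
have XpiM : X *m pi *m M = X *m pi - P.
  by rewrite -XpiP -{2}[X *m pi]mulmx1 -mulmxBr opprB addrC subrK.
rewrite mulmxBl -(mulmxA _ G) -(mulmxA _ M) M_idem XpiM.
by rewrite opprB addrA [M + _]addrC subrK.
Qed.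

Theorem min_norm_ginv :
  Lam *m (G - X *m pi *m M *m G) *m Lam = Lam /\
  pi *m (G - X *m pi *m M *m G) *m Lam =
    ctmx Lam *m ctmx (G - X *m pi *m M *m G) *m pi.
Proof.
split; rewrite -mulmxA Gopt_Lam.
  by rewrite mulmxBr mulmx1 mulmxA Lam_X mul0mx subr0.
rewrite -ctmxM Gopt_Lam ctmxB ctmx1 ctmxM pi_herm X_hermitian.
by rewrite mulmxBr mulmxBl mulmx1 mul1mx mulmxA.
Qed.

End MinimumNormGinverse.

Theorem mainTheorem2 (C : numClosedFieldType) (m N : nat)
  (Lambda : 'M[C]_(m, N)) (d : 'rV[C]_N)
  (hd : forall i : 'I_N, 0 < d 0 i)
  (Gmp : 'M[C]_(N, m)) (hGmp : is_MPinv Lambda Gmp)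
  (Xdd : 'M[C]_N)
  (hXdd : is_MPinv ((1%:M - Gmp *m Lambda) *m diag_mx d *m (1%:M - Gmp *m Lambda)) Xdd) :
  let pi := diag_mx d in
  let M := Gmp *m Lambda in
  let Gopt := Gmp - Xdd *m pi *m M *m Gmp in
  Lambda *m Gopt *m Lambda = Lambda /\
  pi *m Gopt *m Lambda = ctmx Lambda *m ctmx Gopt *m pi.
Proof.
exact: min_norm_ginv (diag_pos_hermitian hd) (diag_pos_definite hd) hGmp hXdd.
Qed.
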